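(* Let $\mathcal S$ and $\mathcal T$ be additive categories and let $T:\mathcal S\to\mathcal T$ be an additive functor admitting a left adjoint $S_\ell$. Then a morphism $g\in\mathcal S(A,B)$ is $\mathrm{add}(\mathrm{im}(S_\ell))$-epic if and only if $T(g)$ is a split epimorphism.
   Context: $\mathrm{add}(\mathrm{im}(S_\ell))$ is the full subcategory of $\mathcal S$ of direct summands of finite direct sums of objects of the form $S_\ell(C)$, $C$ in $\mathcal T$. For a full subcategory $\mathcal X$ of $\mathcal S$, a morphism $g\in\mathcal S(A,B)$ is $\mathcal X$-epic if for every object $X$ of $\mathcal X$ the map $\mathcal S(X,g):\mathcal S(X,A)\to\mathcal S(X,B)$ is surjective. *)

From mathcomp Require Import all_boot all_algebra.
Set Implicit Arguments. Unset Strict Implicit. Unset Printing Implicit Defensive.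
Import GRing.Theory.
Local Open Scope ring_scope.

Record AddCat := {
  Ob : Type;
  Mor : Ob -> Ob -> zmodType;
  idm : forall A, Mor A A;
  comp : forall A B C, Mor B C -> Mor A B -> Mor A C;
  comp_idl : forall A B (f : Mor A B), comp (idm B) f = f;
  comp_idr : forall A B (f : Mor A B), comp f (idm A) = f;
  compA : forall A B C D (f : Mor C D) (g : Mor B C) (h : Mor A B),
      comp f (comp g h) = comp (comp f g) h;
  comp_addl : forall A B C (f f' : Mor B C) (g : Mor A B),
      comp (f + f') g = comp f g + comp f' g;
  comp_addr : forall A B C (f : Mor B C) (g g' : Mor A B),
      comp f (g + g') = comp f g + comp f g';
  has_zero_object : exists Z : Ob, idm Z = 0;
  has_biproducts : forall A B : Ob, exists (P : Ob) (i1 : Mor A P) (i2 : Mor B P)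
      (p1 : Mor P A) (p2 : Mor P B),
      [/\ comp p1 i1 = idm A, comp p2 i2 = idm B, comp p1 i2 = 0, comp p2 i1 = 0
        & comp i1 p1 + comp i2 p2 = idm P]
}.

Arguments idm {_} _.
Arguments comp {_ _ _ _} _ _.

Record AddFunctor (C D : AddCat) := {
  F_ob : Ob C -> Ob D;
  F_hom : forall A B, Mor A B -> Mor (F_ob A) (F_ob B);
  F_id : forall A, F_hom (idm A) = idm (F_ob A);
  F_comp : forall A B E (f : Mor B E) (g : Mor A B),
      F_hom (comp f g) = comp (F_hom f) (F_hom g);
  F_add : forall A B (f g : Mor A B), F_hom (f + g) = F_hom f + F_hom g
}.

Arguments F_ob {_ _} _ _.
Arguments F_hom {_ _} _ {_ _} _.

(* Plain functors (a left adjoint of an additive functor between additive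
   categories is automatically additive; we do not assume it). *)
Record Functor (C D : AddCat) := {
  G_ob : Ob C -> Ob D;
  G_hom : forall A B, Mor A B -> Mor (G_ob A) (G_ob B);
  G_id : forall A, G_hom (idm A) = idm (G_ob A);
  G_comp : forall A B E (f : Mor B E) (g : Mor A B),
      G_hom (comp f g) = comp (G_hom f) (G_hom g)
}.

Arguments G_ob {_ _} _ _.
Arguments G_hom {_ _} _ {_ _} _.

Definition is_left_adjoint (S T : AddCat) (L : Functor T S) (R : AddFunctor S T) :=
  exists phi : forall (C : Ob T) (A : Ob S), Mor (G_ob L C) A -> Mor C (F_ob R A),
    [/\ forall C A, bijective (@phi C A),
        forall C C' A (f : Mor (G_ob L C) A) (u : Mor C' C),
          phi C' A (comp f (G_hom L u)) = comp (phi C A f) u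
      & forall C A A' (f : Mor (G_ob L C) A) (a : Mor A A'),
          phi C A' (comp a f) = comp (F_hom R a) (phi C A f)].

Definition is_finite_direct_sum (S : AddCat) (n : nat) (X : 'I_n -> Ob S) (Y : Ob S) :=
  exists (iota : forall i, Mor (X i) Y) (pi : forall i, Mor Y (X i)),
    (forall i, comp (pi i) (iota i) = idm (X i)) /\
    (forall i j, i != j -> comp (pi j) (iota i) = 0) /\
    \sum_(i < n) comp (iota i) (pi i) = idm Y.

Definition is_direct_summand (S : AddCat) (X Y : Ob S) :=
  exists (X' : Ob S) (i1 : Mor X Y) (i2 : Mor X' Y) (p1 : Mor Y X) (p2 : Mor Y X'),
    [/\ comp p1 i1 = idm X, comp p2 i2 = idm X', comp p1 i2 = 0, comp p2 i1 = 0
      & comp i1 p1 + comp i2 p2 = idm Y].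

Definition in_add_im (S T : AddCat) (L : Functor T S) (X : Ob S) :=
  exists (n : nat) (C : 'I_n -> Ob T) (Y : Ob S),
    is_finite_direct_sum (fun i => G_ob L (C i)) Y /\ is_direct_summand X Y.

Definition is_epic_wrt (S : AddCat) (P : Ob S -> Prop) (A B : Ob S) (g : Mor A B) :=
  forall X, P X -> forall h : Mor X B, exists k : Mor X A, comp g k = h.

Definition is_split_epi (T : AddCat) (A B : Ob T) (g : Mor A B) :=
  exists s : Mor B A, comp g s = idm B.

(* If [T g] has a section [s], every [f : S_l C -> B] lifts along [g]: under the
   adjunction [f] corresponds to [u : C -> T B], and the counit applied to
   [S_l (s u)] is a lift.  Lifting against a fixed object passes to finite
   direct sums and retracts, hence to all of add(im S_l).  Conversely, lifting
   the counit [S_l (T B) -> B] along [g] and transposing gives a section of [T g]. *)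
From Pilot Require Import Defs.
From mathcomp Require Import all_boot all_algebra.
Import Defs.
Set Implicit Arguments. Unset Strict Implicit. Unset Printing Implicit Defensive.
Import GRing.Theory.
Local Open Scope ring_scope.

Section AdditiveCategory.
Variable S : AddCat.

Lemma comp0l (A B C : Ob S) (g : Mor A B) : comp (0 : Mor B C) g = 0.
Proof. by apply: (addrI (comp 0 g)); rewrite -comp_addl !addr0. Qed.

Lemma comp0r (A B C : Ob S) (f : Mor B C) : comp f (0 : Mor A B) = 0.
Proof. by apply: (addrI (comp f 0)); rewrite -comp_addr !addr0. Qed.

Lemma comp_sumr (A B C : Ob S) n (f : Mor B C) (g : 'I_n -> Mor A B) :
  comp f (\sum_(i < n) g i) = \sum_(i < n) comp f (g i).
Proof.
apply: (big_morph (comp f)); last exact: comp0r.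
by move=> x y; rewrite comp_addr.
Qed.

Lemma finite_direct_sum1 (X : Ob S) : is_finite_direct_sum (fun _ : 'I_1 => X) X.
Proof.
exists (fun _ => idm X), (fun _ => idm X); split; first by move=> i; rewrite comp_idl.
split; first by move=> i j; rewrite !ord1 eqxx.
by rewrite big_ord1 comp_idl.
Qed.

Lemma direct_summand_refl (X : Ob S) : is_direct_summand X X.
Proof.
have [Z idZ0] := has_zero_object S.
exists Z, (idm X), 0, (idm X), 0; split.
- by rewrite comp_idl.
- by rewrite comp0l idZ0.
- by rewrite comp0r.
- by rewrite comp0l.
- by rewrite comp_idl comp0l addr0.
Qed.

Definition is_epic_at (A B : Ob S) (g : Mor A B) (X : Ob S) :=
  forall h : Mor X B, exists k : Mor X A, comp g k = h.

Variables (A B : Ob S) (g : Mor A B).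

Lemma epic_at_retract (X Y : Ob S) (i : Mor X Y) (p : Mor Y X) :
  comp p i = idm X -> is_epic_at g Y -> is_epic_at g X.
Proof.
move=> p_retr epicY h; have [k gk] := epicY (comp h p).
by exists (comp k i); rewrite compA gk -compA p_retr comp_idr.
Qed.

Lemma epic_at_finite_direct_sum n (X : 'I_n -> Ob S) (Y : Ob S) :
  is_finite_direct_sum X Y -> (forall i, is_epic_at g (X i)) -> is_epic_at g Y.
Proof.
move=> [iota [pi [_ [_ sum_id]]]] epicX h.
(* Hom-sets are choiceTypes, so the lifts can be chosen without a choice axiom. *)
have lift i : exists k, comp g k == comp h (iota i).
  by have [k gk] := epicX i (comp h (iota i)); exists k; apply/eqP.
pose k i := xchoose (lift i).
have gk i : comp g (k i) = comp h (iota i) by apply/eqP; exact: (xchooseP (lift i)).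
exists (\sum_(i < n) comp (k i) (pi i)).
rewrite comp_sumr -[RHS]comp_idr -sum_id comp_sumr.
by apply: eq_bigr => i _; rewrite !compA gk.
Qed.

Lemma epic_at_add_im (T : AddCat) (L : Functor T S) (X : Ob S) :
  (forall C, is_epic_at g (G_ob L C)) -> in_add_im L X -> is_epic_at g X.
Proof.
move=> epicL [n [C [Y [sumY [_ [i1 [_ [p1 [_ [p1i1 _ _ _ _]]]]]]]]]].
exact: epic_at_retract p1i1 (epic_at_finite_direct_sum sumY (fun i => epicL (C i))).
Qed.

End AdditiveCategory.

Section Adjunction.
Variables (S T : AddCat) (R : AddFunctor S T) (L : Functor T S).
Variable phi : forall (C : Ob T) (A : Ob S), Mor (G_ob L C) A -> Mor C (F_ob R A).
Hypothesis phi_bij : forall C A, bijective (@phi C A).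
Hypothesis phi_natl : forall C C' A (f : Mor (G_ob L C) A) (u : Mor C' C),
  phi (comp f (G_hom L u)) = comp (phi f) u.
Hypothesis phi_natr : forall C A A' (f : Mor (G_ob L C) A) (a : Mor A A'),
  phi (comp a f) = comp (F_hom R a) (phi f).

Lemma counit_exists (A : Ob S) :
  exists eps : Mor (G_ob L (F_ob R A)) A, phi eps = idm (F_ob R A).
Proof. by have [psi _ phiK] := phi_bij (F_ob R A) A; exists (psi (idm _)); apply: phiK. Qed.

Lemma epic_at_image_of_split_epi (A B : Ob S) (g : Mor A B) (C : Ob T) :
  is_split_epi (F_hom R g) -> is_epic_at g (G_ob L C).
Proof.
move=> [s gs] h; have [eps phi_eps] := counit_exists A.
exists (comp eps (G_hom L (comp s (phi h)))).
apply: (bij_inj (phi_bij C B)).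
by rewrite phi_natr phi_natl phi_eps comp_idl compA gs comp_idl.
Qed.

Lemma split_epi_of_epic_at_image (A B : Ob S) (g : Mor A B) :
  is_epic_at g (G_ob L (F_ob R B)) -> is_split_epi (F_hom R g).
Proof.
move=> epic; have [eps phi_eps] := counit_exists B.
have [k gk] := epic eps.
by exists (phi k); rewrite -phi_natr gk.
Qed.

End Adjunction.

Theorem lemma2p2 (S T : AddCat) (TF : AddFunctor S T) (L : Functor T S)
    (adj : is_left_adjoint L TF) (A B : Ob S) (g : Mor A B) :
  is_epic_wrt (in_add_im L) g <-> is_split_epi (F_hom TF g).
Proof.
have [phi [phi_bij phi_natl phi_natr]] := adj.
split=> [epic | split_g].
- apply: (split_epi_of_epic_at_image phi_bij phi_natr).
  apply: epic; exists 1%N, (fun _ => F_ob TF B), (G_ob L (F_ob TF B)).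
  by split; [exact: finite_direct_sum1 | exact: direct_summand_refl].
- move=> X X_add.
  apply: (epic_at_add_im _ X_add) => C.
  exact: (epic_at_image_of_split_epi phi_bij phi_natl phi_natr split_g).
Qed.
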